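(* Let $M$ and $M'$ be matroids on disjoint ground sets. If at least one of $M$, $M'$ has the Borsuk property, then $M\oplus M'$ has the Borsuk property.
   Context: $M\oplus M'$ is the direct sum: ground set the disjoint union, bases the unions $B\cup B'$ with $B$ a basis of $M$ and $B'$ a basis of $M'$. For a matroid $M$, $\mathcal{B}(M)$ denotes its set of bases, and the distance between two bases $B,B'$ is $|B\triangle B'|$; $\operatorname{diam}$ denotes diameter. The Borsuk number $f(M)$ is the minimum number of parts in a partition of $\mathcal{B}(M)$ in which every part has diameter strictly smaller than $\operatorname{diam}(\mathcal{B}(M))$; if $M$ has exactly one basis, $f(M):=+\infty$. If $M$ has $n$ elements and $c$ connected components, $M$ has the Borsuk property if $f(M)\le n-c+1$. *)

(* Matroids on a finite ground set E (the whole finType),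
   given by their set of bases. *)
From mathcomp Require Import all_boot.
Set Implicit Arguments. Unset Strict Implicit. Unset Printing Implicit Defensive.

Section Matroids.
Variable E : finType.
Implicit Types (Bs P : {set {set E}}) (A B C I : {set E}).

Definition is_matroid_bases Bs : Prop :=
  Bs != set0 /\
  forall B1 B2, B1 \in Bs -> B2 \in Bs -> forall x, x \in B1 :\: B2 ->
    exists y, (y \in B2 :\: B1) && ((y |: (B1 :\ x)) \in Bs).

Definition indep Bs I : bool := [exists B in Bs, I \subset B].

Definition circuit Bs C : bool :=
  ~~ indep Bs C && [forall e in C, indep Bs (C :\ e)].

Definition connrel Bs (e f : E) : bool :=
  (e == f) || [exists C, [&& circuit Bs C, e \in C & f \in C]].

Definition ncomp Bs : nat := #|[set [set f | connrel Bs e f] | e : E]|.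

Definition bdist A B : nat := #|(A :\: B) :|: (B :\: A)|.

Definition diam (P : {set {set E}}) : nat :=
  \max_(A in P) \max_(B in P) bdist A B.

Definition borsuk_partition Bs (Q : {set {set {set E}}}) : bool :=
  partition Q Bs && [forall X in Q, diam X < diam Bs].

(* f(M) <= k  (f(M) = +oo, i.e. never <= k, when no such partition exists,
   e.g. when M has a single basis) *)
Definition borsuk_le Bs (k : nat) : bool :=
  [exists Q, borsuk_partition Bs Q && (#|Q| <= k)].

Definition borsuk_property Bs : bool :=
  borsuk_le Bs (#|E| - ncomp Bs + 1).

End Matroids.

Definition dsum (E E' : finType) (Bs : {set {set E}}) (Bs' : {set {set E'}})
  : {set {set (E + E')%type}} :=
  [set ((inl @: B) :|: (inr @: B') : {set (E + E')%type}) | B : {set E} in Bs, B' : {set E'} in Bs'].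

From mathcomp Require Import all_boot zify.
Set Implicit Arguments. Unset Strict Implicit. Unset Printing Implicit Defensive.

(* If Q is a Borsuk partition of B(M), the blocks {B u B' | B in X, B' in B(M')}
   for X in Q partition B(M (+) M'); distances add across the direct sum, so
   such a block has diameter diam X + diam B(M') < diam B(M (+) M'), and
   f(M (+) M') <= f(M).  Every circuit of M (+) M' lies on one side, so the
   components of M (+) M' are the images of those of M and M', and
   c(M (+) M') <= c(M) + c(M') <= c(M) + |E'|: the bound n - c + 1 can only
   grow. *)

Section DisjointUnion.
Variables E E' : finType.
Implicit Types (A B : {set E}) (S : {set E + E'}).

Definition dunion A (A' : {set E'}) : {set E + E'} := inl @: A :|: inr @: A'.
Definition lpart S : {set E} := inl @^-1: S.
Definition rpart S : {set E'} := inr @^-1: S.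

Lemma mem_dunionl A (A' : {set E'}) x : (inl x \in dunion A A') = (x \in A).
Proof.
rewrite inE (mem_imset _ _ (@inl_inj _ _)).
by case: (x \in A) => //; apply/imsetP => -[].
Qed.

Lemma mem_dunionr A (A' : {set E'}) x : (inr x \in dunion A A') = (x \in A').
Proof.
rewrite inE (mem_imset _ _ (@inr_inj _ _)).
by have -> : (inr x \in inl @: A) = false by apply/imsetP => -[].
Qed.

Definition mem_dunion := (mem_dunionl, mem_dunionr).

Lemma lpart_dunion A (A' : {set E'}) : lpart (dunion A A') = A.
Proof. by apply/setP => x; rewrite inE mem_dunion. Qed.

Lemma rpart_dunion A (A' : {set E'}) : rpart (dunion A A') = A'.
Proof. by apply/setP => x; rewrite inE mem_dunion. Qed.

Lemma dunionK S : dunion (lpart S) (rpart S) = S.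
Proof. by apply/setP => -[x|x]; rewrite mem_dunion inE. Qed.

Lemma dunion_inj A B (A' B' : {set E'}) :
  dunion A A' = dunion B B' -> A = B /\ A' = B'.
Proof.
move=> eqAB; split.
  by rewrite -(lpart_dunion A A') eqAB lpart_dunion.
by rewrite -(rpart_dunion A A') eqAB rpart_dunion.
Qed.

Lemma dunionD1l A (A' : {set E'}) x : dunion A A' :\ inl x = dunion (A :\ x) A'.
Proof.
by apply/setP => -[y|y]; rewrite !(mem_dunion, in_setD, in_set1) ?(inj_eq inl_inj).
Qed.

Lemma dunionD1r A (A' : {set E'}) x : dunion A A' :\ inr x = dunion A (A' :\ x).
Proof.
by apply/setP => -[y|y]; rewrite !(mem_dunion, in_setD, in_set1) ?(inj_eq inr_inj).
Qed.

Lemma dunionD A B (A' B' : {set E'}) :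
  dunion A A' :\: dunion B B' = dunion (A :\: B) (A' :\: B').
Proof. by apply/setP => -[y|y]; rewrite !(mem_dunion, in_setD). Qed.

Lemma dunionU A B (A' B' : {set E'}) :
  dunion A A' :|: dunion B B' = dunion (A :|: B) (A' :|: B').
Proof. by apply/setP => -[y|y]; rewrite !(mem_dunion, in_setU). Qed.

Lemma subset_dunion A B (A' B' : {set E'}) :
  (dunion A A' \subset dunion B B') = (A \subset B) && (A' \subset B').
Proof.
apply/subsetP/andP => [sub | [/subsetP subAB /subsetP subAB']].
  split; apply/subsetP => x.
    by have := sub (inl x); rewrite !mem_dunion.
  by have := sub (inr x); rewrite !mem_dunion.
by case=> x; rewrite !mem_dunion; [apply: subAB | apply: subAB'].
Qed.

Lemma card_dunion A (A' : {set E'}) : #|dunion A A'| = #|A| + #|A'|.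
Proof.
rewrite cardsU !card_imset; try by move=> ? ? [].
suff -> : inl @: A :&: inr @: A' = set0 by rewrite cards0 subn0.
apply/setP => -[x|x]; rewrite !inE.
  by apply/andP => -[_ /imsetP[]].
by apply/andP => -[/imsetP[]].
Qed.

Lemma bdist_dunion A B (A' B' : {set E'}) :
  bdist (dunion A A') (dunion B B') = bdist A B + bdist A' B'.
Proof. by rewrite /bdist !dunionD dunionU card_dunion. Qed.

End DisjointUnion.

Section Diameter.
Variable T : finType.
Implicit Types (A B : {set T}) (P : {set {set T}}).

Lemma diam_le P d :
  (forall A B, A \in P -> B \in P -> bdist A B <= d) -> diam P <= d.
Proof.
by move=> le_d; apply/bigmax_leqP => A PA; apply/bigmax_leqP => B; apply: le_d.
Qed.

Lemma bdist_le_diam P A B : A \in P -> B \in P -> bdist A B <= diam P.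
Proof.
move=> PA PB; apply: leq_trans (leq_bigmax_cond _ PA).
exact: (leq_bigmax_cond _ PB).
Qed.

Lemma diam_attained P :
  P != set0 -> exists A B, [/\ A \in P, B \in P & diam P = bdist A B].
Proof.
rewrite -card_gt0 => P_gt0; rewrite /diam.
have [A PA ->] := eq_bigmax_cond (fun A => \max_(B in P) bdist A B) P_gt0.
have [B PB ->] := eq_bigmax_cond (bdist A) P_gt0.
by exists A, B.
Qed.

End Diameter.

Section DirectSum.
Variables E E' : finType.
Implicit Types (Bs X : {set {set E}}) (Q : {set {set {set E}}}).

Lemma mem_dsum Bs (Bs' : {set {set E'}}) S :
  reflect (exists B B', [/\ B \in Bs, B' \in Bs' & S = dunion B B'])
          (S \in dsum Bs Bs').
Proof.
apply: (iffP imset2P) => [[B B' BsB BsB' ->] | [B [B' [BsB BsB' ->]]]].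
  by exists B, B'.
by exists B B'.
Qed.

Lemma dsum_neq0 X (X' : {set {set E'}}) :
  X != set0 -> X' != set0 -> dsum X X' != set0.
Proof.
move=> /set0Pn[B XB] /set0Pn[B' XB']; apply/set0Pn.
by exists (dunion B B'); apply/mem_dsum; exists B, B'.
Qed.

Lemma diam_dsum X (X' : {set {set E'}}) :
  X != set0 -> X' != set0 -> diam (dsum X X') = diam X + diam X'.
Proof.
move=> X_neq0 X'_neq0; apply/eqP; rewrite eqn_leq; apply/andP; split.
  apply: diam_le => _ _ /mem_dsum[A [A' [XA XA' ->]]] /mem_dsum[B [B' [XB XB' ->]]].
  by rewrite bdist_dunion leq_add // bdist_le_diam.
have [A [B [XA XB ->]]] := diam_attained X_neq0.
have [A' [B' [XA' XB' ->]]] := diam_attained X'_neq0.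
by rewrite -bdist_dunion bdist_le_diam //; apply/mem_dsum; [exists A, A' | exists B, B'].
Qed.

Lemma partition_dsum Q (Q' : {set {set {set E'}}}) Bs (Bs' : {set {set E'}}) :
  partition Q Bs -> partition Q' Bs' ->
  partition [set dsum X X' | X in Q, X' in Q'] (dsum Bs Bs').
Proof.
move=> partQ partQ'; have trivQ := partition_trivIset partQ.
have trivQ' := partition_trivIset partQ'.
apply/and3P; split.
- apply/eqP/setP => S; apply/bigcupP/mem_dsum.
    move=> [_ /imset2P[X X' QX QX' ->] /mem_dsum[B [B' [XB XB' ->]]]].
    exists B, B'; rewrite -(cover_partition partQ) -(cover_partition partQ').
    by split=> //; apply/bigcupP; [exists X | exists X'].
  move=> [B [B' []]]; rewrite -(cover_partition partQ) -(cover_partition partQ').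
  move=> /bigcupP[X QX XB] /bigcupP[X' QX' XB'] ->.
  by exists (dsum X X'); [apply: imset2_f | apply/mem_dsum; exists B, B'].
- apply/trivIsetP => _ _ /imset2P[X1 X1' QX1 QX1' ->] /imset2P[X2 X2' QX2 QX2' ->].
  apply: contraR; rewrite -setI_eq0 => /set0Pn[S /setIP[]].
  move=> /mem_dsum[B [B' [XB XB' ->]]] /mem_dsum[C [C' [XC XC' /dunion_inj[eqBC eqBC']]]].
  rewrite -eqBC -eqBC' in XC XC'.
  by rewrite -(def_pblock trivQ QX1 XB) -(def_pblock trivQ' QX1' XB')
    (def_pblock trivQ QX2 XC) (def_pblock trivQ' QX2' XC').
- apply/imset2P => -[X X' QX QX' /esym/eqP].
  by apply/negP/dsum_neq0;
    [apply: partition_neq0 partQ QX | apply: partition_neq0 partQ' QX'].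
Qed.

End DirectSum.

Section MatroidFacts.
Variable T : finType.
Implicit Types (P D : {set {set T}}).

Definition component P (e : T) : {set T} := [set f | connrel P e f].

Lemma indep0 P : P != set0 -> indep P set0.
Proof. by case/set0Pn => B PB; apply/existsP; exists B; rewrite PB sub0set. Qed.

Lemma ncomp_le_card P : ncomp P <= #|T|.
Proof. exact: leq_trans (leq_imset_card _ _) (max_card _). Qed.

Lemma partition_set1 D : D != set0 -> partition [set D] D.
Proof. by move=> D_neq0; rewrite /partition cover1 eqxx trivIset1 inE eq_sym D_neq0. Qed.

Lemma borsuk_leW P k k' : k <= k' -> borsuk_le P k -> borsuk_le P k'.
Proof.
move=> le_kk' /existsP[Q /andP[partQ cardQ]]; apply/existsP; exists Q.
by rewrite partQ (leq_trans cardQ).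
Qed.

End MatroidFacts.

Section DirectSumBases.
Variables (E E' : finType) (Bs : {set {set E}}) (Bs' : {set {set E'}}).
Hypotheses (Bs_neq0 : Bs != set0) (Bs'_neq0 : Bs' != set0).

Lemma borsuk_partition_dsum Q (Q' : {set {set {set E'}}}) :
  partition Q Bs -> partition Q' Bs' ->
  {in Q & Q', forall X X', diam X + diam X' < diam Bs + diam Bs'} ->
  borsuk_partition (dsum Bs Bs') [set dsum X X' | X in Q, X' in Q'].
Proof.
move=> partQ partQ' small; rewrite /borsuk_partition partition_dsum //=.
apply/forallP => S; apply/implyP => /imset2P[X X' QX QX' ->].
rewrite diam_dsum ?(partition_neq0 partQ) ?(partition_neq0 partQ') //.
by rewrite diam_dsum //; apply: small.
Qed.

Lemma borsuk_le_dsuml k : borsuk_le Bs k -> borsuk_le (dsum Bs Bs') k.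
Proof.
case/existsP => Q /andP[/andP[partQ /forallP smallQ] cardQ].
apply/existsP; exists [set dsum X X' | X in Q, X' in [set Bs']].
rewrite borsuk_partition_dsum ?partition_set1 //=.
  by rewrite imset2_set1r (leq_trans (leq_imset_card _ _)).
move=> X X' QX /set1P ->; rewrite ltn_add2r.
by have := smallQ X; rewrite QX.
Qed.

Lemma borsuk_le_dsumr k : borsuk_le Bs' k -> borsuk_le (dsum Bs Bs') k.
Proof.
case/existsP => Q' /andP[/andP[partQ' /forallP smallQ'] cardQ'].
apply/existsP; exists [set dsum X X' | X in [set Bs], X' in Q'].
rewrite borsuk_partition_dsum ?partition_set1 //=.
  by rewrite imset2_set1l (leq_trans (leq_imset_card _ _)).
move=> X X' /set1P -> QX'; rewrite ltn_add2l.
by have := smallQ' X'; rewrite QX'.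
Qed.

Lemma indep_dunion A (A' : {set E'}) :
  indep (dsum Bs Bs') (dunion A A') = indep Bs A && indep Bs' A'.
Proof.
apply/existsP/andP => [[_ /andP[/mem_dsum[B [B' [BsB BsB' ->]]]]] | ].
  by rewrite subset_dunion => /andP[subA subA']; split; apply/existsP;
    [exists B | exists B']; apply/andP.
case=> /existsP[B /andP[BsB subA]] /existsP[B' /andP[BsB' subA']].
exists (dunion B B'); rewrite subset_dunion subA subA' !andbT.
by apply/mem_dsum; exists B, B'.
Qed.

Lemma circuit_dunionl C : circuit (dsum Bs Bs') (dunion C set0) = circuit Bs C.
Proof.
rewrite /circuit indep_dunion indep0 // andbT; congr andb.
apply/forallP/forallP => indepD1 x.
  apply/implyP => Cx; have := indepD1 (inl x).
  by rewrite mem_dunion Cx dunionD1l indep_dunion indep0 // andbT.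
case: x => [x | x]; rewrite mem_dunion ?inE //; apply/implyP => Cx.
by rewrite dunionD1l indep_dunion indep0 // andbT (implyP (indepD1 x)).
Qed.

Lemma circuit_dunionr C' : circuit (dsum Bs Bs') (dunion set0 C') = circuit Bs' C'.
Proof.
rewrite /circuit indep_dunion indep0 //; congr andb.
apply/forallP/forallP => indepD1 x.
  apply/implyP => Cx; have := indepD1 (inr x).
  by rewrite mem_dunion Cx dunionD1r indep_dunion indep0.
case: x => [x | x]; rewrite mem_dunion ?inE //; apply/implyP => Cx.
by rewrite dunionD1r indep_dunion indep0 // (implyP (indepD1 x)).
Qed.

Lemma circuit_dunion_one_sided A (A' : {set E'}) :
  circuit (dsum Bs Bs') (dunion A A') -> (A == set0) || (A' == set0).
Proof.
case/andP => dep /forallP indepD1; apply/norP => -[/set0Pn[x Ax] /set0Pn[y A'y]].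
have := indepD1 (inl x); have := indepD1 (inr y).
rewrite !mem_dunion Ax A'y dunionD1l dunionD1r !indep_dunion.
by move=> /andP[indepA _] /andP[_ indepA']; rewrite indep_dunion indepA indepA' in dep.
Qed.

Lemma circuit_dsum_one_sided C :
  circuit (dsum Bs Bs') C -> (lpart C == set0) || (rpart C == set0).
Proof. by rewrite -{1}(dunionK C); apply: circuit_dunion_one_sided. Qed.

Lemma circuit_dsum_inl C x : circuit (dsum Bs Bs') C -> inl x \in C -> rpart C = set0.
Proof.
move=> circC Cx; have Lx : x \in lpart C by rewrite inE.
by case/orP: (circuit_dsum_one_sided circC) => /eqP // L0; rewrite L0 inE in Lx.
Qed.

Lemma circuit_dsum_inr C y : circuit (dsum Bs Bs') C -> inr y \in C -> lpart C = set0.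
Proof.
move=> circC Cy; have Ry : y \in rpart C by rewrite inE.
by case/orP: (circuit_dsum_one_sided circC) => /eqP // R0; rewrite R0 inE in Ry.
Qed.

Lemma connrel_dsumll x y : connrel (dsum Bs Bs') (inl x) (inl y) = connrel Bs x y.
Proof.
rewrite /connrel (inj_eq inl_inj); congr orb; apply/existsP/existsP => -[C].
  case/and3P => circC Cx Cy; have R0 := circuit_dsum_inl circC Cx.
  rewrite -(dunionK C) R0 circuit_dunionl in circC.
  by exists (lpart C); rewrite circC !inE Cx Cy.
case/and3P => circC Cx Cy; exists (dunion C set0).
by rewrite circuit_dunionl !mem_dunion circC Cx.
Qed.

Lemma connrel_dsumrr x y : connrel (dsum Bs Bs') (inr x) (inr y) = connrel Bs' x y.
Proof.
rewrite /connrel (inj_eq inr_inj); congr orb; apply/existsP/existsP => -[C].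
  case/and3P => circC Cx Cy; have L0 := circuit_dsum_inr circC Cx.
  rewrite -(dunionK C) L0 circuit_dunionr in circC.
  by exists (rpart C); rewrite circC !inE Cx Cy.
case/and3P => circC Cx Cy; exists (dunion set0 C).
by rewrite circuit_dunionr !mem_dunion circC Cx.
Qed.

Lemma connrel_dsumlr x y : connrel (dsum Bs Bs') (inl x) (inr y) = false.
Proof.
apply/negbTE/existsP => -[C /and3P[circC Cx Cy]].
by move: (circuit_dsum_inl circC Cx) => /setP/(_ y); rewrite !inE Cy.
Qed.

Lemma connrel_dsumrl x y : connrel (dsum Bs Bs') (inr y) (inl x) = false.
Proof.
apply/negbTE/existsP => -[C /and3P[circC Cy Cx]].
by move: (circuit_dsum_inl circC Cx) => /setP/(_ y); rewrite !inE Cy.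
Qed.

Lemma component_dsuml x : component (dsum Bs Bs') (inl x) = inl @: component Bs x.
Proof.
apply/setP => -[y | y]; rewrite inE.
  by rewrite connrel_dsumll (mem_imset _ _ (@inl_inj _ _)) inE.
by rewrite connrel_dsumlr; apply/esym/imsetP => -[].
Qed.

Lemma component_dsumr y : component (dsum Bs Bs') (inr y) = inr @: component Bs' y.
Proof.
apply/setP => -[x | x]; rewrite inE.
  by rewrite connrel_dsumrl; apply/esym/imsetP => -[].
by rewrite connrel_dsumrr (mem_imset _ _ (@inr_inj _ _)) inE.
Qed.

Lemma ncomp_dsum : ncomp (dsum Bs Bs') <= ncomp Bs + ncomp Bs'.
Proof.
pose compl := [set (@inl E E') @: K | K : {set E} in [set component Bs x | x : E]].
pose compr := [set (@inr E E') @: K | K : {set E'} in [set component Bs' y | y : E']].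
have sub : [set component (dsum Bs Bs') e | e : E + E'] \subset compl :|: compr.
  apply/subsetP => _ /imsetP[[x | y] _ ->]; rewrite inE.
    by rewrite component_dsuml !imset_f.
  by rewrite component_dsumr !imset_f ?orbT.
apply: leq_trans (subset_leq_card sub) _.
exact: leq_trans (leq_card_setU _ _) (leq_add (leq_imset_card _ _) (leq_imset_card _ _)).
Qed.

End DirectSumBases.

Theorem corollary4p3 (E E' : finType) (Bs : {set {set E}}) (Bs' : {set {set E'}}) :
  is_matroid_bases Bs -> is_matroid_bases Bs' ->
  borsuk_property Bs \/ borsuk_property Bs' ->
  borsuk_property (dsum Bs Bs').
Proof.
move=> [Bs_neq0 _] [Bs'_neq0 _].
have ncomp_sum := ncomp_dsum Bs_neq0 Bs'_neq0.
have := ncomp_le_card Bs; have := ncomp_le_card Bs'.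
rewrite /borsuk_property card_sum => c'_le c_le.
by case=> [/(borsuk_le_dsuml Bs_neq0 Bs'_neq0) | /(borsuk_le_dsumr Bs_neq0 Bs'_neq0)];
  apply: borsuk_leW; lia.
Qed.
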